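(* Let $(H,L_H)$ be a right-resolving labeled graph presenting $Y=L_H(X_H)$. Let $\gamma$ be a finite path in $H$ whose start vertex $s_H(\gamma)$ is regular. Then the terminal vertex $t_H(\gamma)$ is regular.
   Context: A labeled graph $(H,L_H)$: finite directed graph (vertices $V_H$, edges $E_H$, source/terminal maps $s_H,t_H$) without sinks or sources, labeling $L_H:E_H\to A$, edge shift $X_H$; $L_H$ acts coordinatewise on paths. $X_H[0,\infty)$ denotes right-infinite paths and $X_H(-\infty,-1]$ left-infinite paths; $s_H$ of a (finite or right-infinite) path is the source of its first edge, $t_H$ of a (finite or left-infinite) path is the terminal vertex of its last edge; $Y[0,\infty)=\{y_{[0,\infty)}:y\in Y\}$. Right-resolving: distinct edges with the same source have distinct labels. $f_H(v)=\{L_H(x):x\in X_H[0,\infty), s_H(x)=v\}$; for $y\in Y$, $F(y)=\{w\in Y[0,\infty): y_{(-\infty,-1]}w\in Y\}$. A vertex $v$ is regular if there is $z\in X_H$ with $t_H(z_{(-\infty,-1]})=v$ and $f_H(v)=F(L_H(z))$. *)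

From mathcomp Require Import all_boot all_algebra.
Set Implicit Arguments. Unset Strict Implicit. Unset Printing Implicit Defensive.
Local Open Scope ring_scope.

Section LabeledGraph.
Variables (V E A : finType) (s t : E -> V) (L : E -> A).

Definition edge_shift (x : int -> E) : Prop := forall i : int, t (x i) = s (x (i + 1)).

Definition presented (y : int -> A) : Prop :=
  exists x, edge_shift x /\ y = (fun i => L (x i)).

Definition right_part {T : Type} (y : int -> T) : nat -> T := fun n => y (Posz n).

Definition concat_lr {T : Type} (y : int -> T) (w : nat -> T) : int -> T :=
  fun i => match i with Posz n => w n | Negz _ => y i end.

Definition follower_vertex (v : V) (w : nat -> A) : Prop :=
  exists x, edge_shift x /\ s (x 0) = v /\ w = (fun n => L (right_part x n)).

Definition follower_seq (y : int -> A) (w : nat -> A) : Prop :=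
  (exists y', presented y' /\ w = right_part y') /\ presented (concat_lr y w).

Definition regular (v : V) : Prop :=
  exists z, edge_shift z /\ t (z (-1)) = v /\
    (forall w, follower_vertex v w <-> follower_seq (fun i => L (z i)) w).

Definition right_resolving : Prop :=
  forall e1 e2 : E, s e1 = s e2 -> L e1 = L e2 -> e1 = e2.

Definition no_sinks_no_sources : Prop :=
  forall v : V, (exists e, s e = v) /\ (exists e, t e = v).

Definition fin_path (e : E) (p : seq E) : bool := path (fun a b => t a == s b) e p.

End LabeledGraph.

(* Extend the witness z of regularity at s(e) by the edge e: the new past is z_{(-oo,-1]} e.
   A word w then follows this past in Y exactly when L(e) w follows the past of z, and, the
   graph being right-resolving, w is a follower of t(e) exactly when L(e) w is a follower of
   s(e).  Regularity at s(e) identifies the two right-hand sides, and induction along the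
   path moves regularity to its terminal vertex. *)
From mathcomp Require Import all_boot all_algebra.
From mathcomp Require Import zify.
From Stdlib Require Import FunctionalExtensionality.
Set Implicit Arguments. Unset Strict Implicit. Unset Printing Implicit Defensive.
Import GRing.Theory.
Local Open Scope ring_scope.

Lemma Posz_addr1 (n : nat) : Posz n + 1 = Posz n.+1. Proof. lia. Qed.
Lemma Negz0_addr1 : Negz 0 + 1 = 0. Proof. lia. Qed.
Lemma NegzS_addr1 (k : nat) : Negz k.+1 + 1 = Negz k. Proof. lia. Qed.

Definition shift {T : Type} (y : int -> T) (k : int) : int -> T := fun i => y (i + k).

Definition scons {T : Type} (a : T) (w : nat -> T) : nat -> T :=
  fun n => if n is m.+1 then w m else a.

Lemma shiftK {T : Type} (y : int -> T) (k : int) : shift (shift y k) (- k) = y.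
Proof. by apply: functional_extensionality => i; rewrite /shift subrK. Qed.

Lemma concat_lr_shift_scons {T : Type} (y : int -> T) (a : T) (u w : nat -> T) :
  concat_lr (shift (concat_lr y (scons a u)) 1) w = shift (concat_lr y (scons a w)) 1.
Proof.
by apply: functional_extensionality => -[n|[|k]]; rewrite /shift /= ?addn1.
Qed.

Section LabeledGraph.
Variables (V E A : finType) (s t : E -> V) (L : E -> A).

Definition ray (u : nat -> E) : Prop := forall n, t (u n) = s (u n.+1).

Lemma ray_right_part (x : int -> E) : edge_shift s t x -> ray (right_part x).
Proof. by move=> hx n; rewrite /right_part hx Posz_addr1. Qed.

Lemma ray_scons (e : E) (u : nat -> E) : ray u -> t e = s (u 0%N) -> ray (scons e u).
Proof. by move=> hu he [|n]; [exact: he|exact: hu]. Qed.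

Lemma exists_ray (hsink : forall v, exists e, s e = v) (v : V) :
  exists2 u, ray u & s (u 0%N) = v.
Proof.
have hsinkb w : exists e, s e == w by have [e <-] := hsink w; exists e.
pose next w := xchoose (hsinkb w).
have s_next w : s (next w) = w by apply/eqP; exact: (xchooseP (hsinkb w)).
exists (fun n => iter n (next \o t) (next v)); last exact: s_next.
by move=> n; rewrite iterS /= s_next.
Qed.

Lemma edge_shift_shift (x : int -> E) (k : int) :
  edge_shift s t x -> edge_shift s t (shift x k).
Proof. by move=> hx i; rewrite /shift hx addrAC. Qed.

Lemma edge_shift_concat_lr (z : int -> E) (u : nat -> E) :
  edge_shift s t z -> ray u -> t (z (-1)) = s (u 0%N) -> edge_shift s t (concat_lr z u).
Proof.
move=> hz hu hzu [n|[|k]].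
- by rewrite Posz_addr1; exact: hu.
- by rewrite Negz0_addr1; exact: hzu.
- by rewrite NegzS_addr1 /= -(NegzS_addr1 k); exact: hz.
Qed.

Lemma presented_shift (y : int -> A) (k : int) :
  presented s t L y -> presented s t L (shift y k).
Proof. by case=> x [hx ->]; exists (shift x k); split; [exact: edge_shift_shift|]. Qed.

Lemma presented_shiftE (y : int -> A) (k : int) :
  presented s t L (shift y k) <-> presented s t L y.
Proof.
split; last exact: presented_shift.
by move=> /(@presented_shift _ (- k)); rewrite shiftK.
Qed.

(* The first clause of F(y) is redundant: w is the right half of y_{(-oo,-1]} w. *)
Lemma follower_seqE (y : int -> A) (w : nat -> A) :
  follower_seq s t L y w <-> presented s t L (concat_lr y w).
Proof. by split=> [[]//|hyw]; split=> //; exists (concat_lr y w). Qed.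

Lemma follower_seq_shift_scons (y : int -> A) (a : A) (u w : nat -> A) :
  follower_seq s t L (shift (concat_lr y (scons a u)) 1) w <->
  follower_seq s t L y (scons a w).
Proof. by rewrite !follower_seqE concat_lr_shift_scons presented_shiftE. Qed.

Lemma follower_vertex_scons (hrr : right_resolving s L) (e : E) (z : int -> E)
    (w : nat -> A) :
  edge_shift s t z -> t (z (-1)) = s e ->
  follower_vertex s t L (s e) (scons (L e) w) <-> follower_vertex s t L (t e) w.
Proof.
move=> hz hze; split.
- case=> x [hx [hx0 hw]].
  have x0_e : x 0 = e by apply: hrr => //; exact: (esym (congr1 (@^~ 0%N) hw)).
  exists (shift x 1); split; first exact: edge_shift_shift.
  split; first by rewrite /shift -hx x0_e.
  apply: functional_extensionality => n; have /= -> := congr1 (@^~ n.+1) hw.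
  by rewrite /right_part /shift Posz_addr1.
- case=> x [hx [hx0 ->]].
  exists (concat_lr z (scons e (right_part x))); split.
    by apply: edge_shift_concat_lr => //; apply: ray_scons; [exact: ray_right_part|].
  by split=> //; apply: functional_extensionality => -[|n].
Qed.

Lemma regular_target (hsink : forall v, exists e, s e = v) (hrr : right_resolving s L)
    (e : E) :
  regular s t L (s e) -> regular s t L (t e).
Proof.
case=> z [hz [hze hzF]].
have [u hu hue] := exists_ray hsink (t e).
pose z' := shift (concat_lr z (scons e u)) 1.
have labels_z' : (fun i => L (z' i)) =
    shift (concat_lr (fun i => L (z i)) (scons (L e) (fun n => L (u n)))) 1.
  by apply: functional_extensionality => i; rewrite /z' /shift; case: (i + 1) => [[]|].
exists z'; split.
  by apply: edge_shift_shift; apply: edge_shift_concat_lr => //; exact: ray_scons.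
split=> [|w]; first by rewrite /z' /shift addNr.
by rewrite labels_z' follower_seq_shift_scons -hzF (follower_vertex_scons _ _ hz).
Qed.

Lemma fin_path_last_closed (P : V -> Prop) :
  (forall e, P (s e) -> P (t e)) ->
  forall e p, fin_path s t e p -> P (s e) -> P (t (last e p)).
Proof.
move=> hP e p; elim: p e => [|e' p IH] e /=; first by move=> _; exact: hP.
by case/andP=> /eqP he hp hse; apply: IH => //; rewrite -he; exact: hP.
Qed.

End LabeledGraph.

(* gamma = e :: p is a (nonempty) finite path; s_H(gamma) = s e,
   t_H(gamma) = t (last e p). *)
Theorem lemma2p2 (V E A : finType) (s t : E -> V) (L : E -> A)
  (hgraph : no_sinks_no_sources s t)
  (hrr : right_resolving s L)
  (e : E) (p : seq E) (hpath : fin_path s t e p)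
  (hreg : regular s t L (s e)) :
  regular s t L (t (last e p)).
Proof.
apply: (fin_path_last_closed _ hpath hreg) => f.
by apply: regular_target => // v; case: (hgraph v).
Qed.
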